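(* Let $\phi$ be a (Lie group) endomorphism of $G$, and define maps $\alpha:\mathbb R^n\to\mathbb R^n$, $\beta:\mathbb R^m\to\mathbb R^n$, $\gamma:\mathbb R^n\to\mathbb R^m$, $\delta:\mathbb R^m\to\mathbb R^m$ by $$\phi(x,0)=(\alpha(x),\gamma(x)),\qquad \phi(0,t)=(\beta(t),\delta(t)),$$ i.e. $\alpha=\pi_{\mathbb R^n}\circ\phi\circ j_{\mathbb R^n}$, $\beta=\pi_{\mathbb R^n}\circ\phi\circ j_{\mathbb R^m}$, $\gamma=\pi_{\mathbb R^m}\circ\phi\circ j_{\mathbb R^n}$, $\delta=\pi_{\mathbb R^m}\circ\phi\circ j_{\mathbb R^m}$, where $\pi$ and $j$ denote the projections onto and injections from the indicated factors of $\mathbb R^n\times\mathbb R^m$. Then $\phi$ is an automorphism of $G$ if and only if the following conditions hold: 1) $\alpha$ is the linear map with matrix $P_\tau\,\mathrm{diag}(c_1,\dots,c_n)$ for some nonzero real numbers $c_1,\dots,c_n$ and some permutation $\tau\in S_n$; 2) $\gamma=0$; 3) $\delta$ is the linear map with matrix $\left({}^t\Omega\,\Omega\right)^{-1}{}^t\Omega\,P_\tau\,\Omega$ (with the same $\tau$); 4) $\beta(t)=\sum_{k=0}^{\infty}\frac{(\delta(t)\cdot\Delta)^k}{(k+1)!}\,U t$ for all $t\in\mathbb R^m$, for some $U\in\mathbb R^{n\times m}$.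
   Context: Fix integers $1\le m\le n$. Let $\Delta_1,\dots,\Delta_m\in\mathbb R^{n\times n}$ be linearly independent, nonsingular, traceless diagonal matrices $\Delta_i=\mathrm{diag}(d_1^{(i)},\dots,d_n^{(i)})$ such that for each $i$, $d_k^{(i)}\neq d_j^{(i)}$ whenever $k\neq j$. For $t=(t_1,\dots,t_m)^T\in\mathbb R^m$ write $t\cdot\Delta=\sum_{i=1}^m t_i\Delta_i$ and $\eta(t)=e^{t\cdot\Delta}$. Let $G=\mathbb R^n\rtimes_\eta\mathbb R^m$ be the Lie group with underlying set $\mathbb R^n\times\mathbb R^m$ and multiplication $(x,t)(y,s)=(x+e^{t\cdot\Delta}y,\ t+s)$. Let $\Omega\in\mathbb R^{n\times m}$ be the matrix with entries $\Omega_{ij}=d_i^{(j)}$ (it is injective, so ${}^t\Omega\Omega$ is invertible). For $\tau\in S_n$ (permutations of $\{1,\dots,n\}$), $P_\tau$ denotes the permutation matrix obtained from $I_n$ by replacing, for each $1\le i\le n$, the $i$-th row by the $\tau^{-1}(i)$-th row. *)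

From HB Require Import structures.
From mathcomp Require Import all_boot all_order all_algebra all_fingroup.
From mathcomp Require Import all_classical all_reals all_analysis.
Set Implicit Arguments. Unset Strict Implicit. Unset Printing Implicit Defensive.
Import Order.TTheory GRing.Theory Num.Theory.
Import numFieldNormedType.Exports.
Local Open Scope ring_scope.

Section Defs.
Variables (R : realType) (n m : nat).

Definition tDelta (Delta : 'I_m -> 'M[R]_n) (t : 'cV[R]_m) : 'M[R]_n :=
  \sum_(i < m) t i 0 *: Delta i.

(* eta(t) = e^{t . Delta}; since t . Delta is diagonal, its exponential is the
   diagonal matrix of the exponentials of its diagonal entries. *)
Definition eta (Delta : 'I_m -> 'M[R]_n) (t : 'cV[R]_m) : 'M[R]_n :=
  diag_mx (\row_k expR (tDelta Delta t k k)).

Definition Gmul (Delta : 'I_m -> 'M[R]_n) (g h : 'cV[R]_n * 'cV[R]_m)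
  : 'cV[R]_n * 'cV[R]_m :=
  (g.1 + eta Delta g.2 *m h.1, g.2 + h.2).

Definition Omega (Delta : 'I_m -> 'M[R]_n) : 'M[R]_(n, m) :=
  \matrix_(i, j) Delta j i i.

End Defs.

Definition Pperm (R : realType) (n : nat) (tau : 'S_n) : 'M[R]_n :=
  \matrix_(i, j) ((tau^-1)%g i == j)%:R.

Definition Delta_hyp (R : realType) (n m : nat) (Delta : 'I_m -> 'M[R]_n) : Prop :=
  (1 <= m <= n)%N /\ (forall i, is_diag_mx (Delta i)) /\
  [/\ (forall a : 'I_m -> R, \sum_(i < m) a i *: Delta i = 0 -> forall i, a i = 0),
      (forall i, Delta i \in unitmx),
      (forall i, \tr (Delta i) = 0) &
      (forall i (k j : 'I_n), k != j -> Delta i k k != Delta i j j)].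

Definition G_endo (R : realType) (n m : nat) (Delta : 'I_m -> 'M[R]_n)
  (phi : 'cV[R]_n * 'cV[R]_m -> 'cV[R]_n * 'cV[R]_m) : Prop :=
  continuous phi /\
  forall g h, phi (Gmul Delta g h) = Gmul Delta (phi g) (phi h).

Definition G_auto (R : realType) (n m : nat) (Delta : 'I_m -> 'M[R]_n)
  (phi : 'cV[R]_n * 'cV[R]_m -> 'cV[R]_n * 'cV[R]_m) : Prop :=
  G_endo Delta phi /\
  exists psi, [/\ G_endo Delta psi, cancel phi psi & cancel psi phi].

From Pilot Require Import Defs.
From HB Require Import structures.
From mathcomp Require Import all_boot all_order all_algebra all_fingroup.
From mathcomp Require Import all_classical all_reals all_analysis.
From mathcomp Require Import lra.
Import Order.TTheory GRing.Theory Num.Theory.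
Import numFieldNormedType.Exports.
Local Open Scope ring_scope.
Local Open Scope classical_set_scope.
Set Implicit Arguments. Unset Strict Implicit. Unset Printing Implicit Defensive.

(** The relation [(0,t)(x,0) = (e^{tΔ}x,0)(0,t)] in [G], pushed through [φ],
    drives the argument.  Its second component says that [γ] is additive and
    invariant under every [e^{tΔ}]; for a direction [t0] in which some [Δ_i] is
    nonsingular, [e^{t0Δ} - 1] is invertible, so every [x] is a coboundary
    [(e^{t0Δ} - 1)y] and [γ = 0].  The first component then reads
    [α(e^{tΔ}x) = e^{δ(t)Δ}α(x)].  Every positive rescaling of a coordinate axis is
    some [e^{tΔ}], so each coordinate of [α] along an axis is additive and
    sign-preserving, hence linear by Cauchy's equation (no continuity is needed):
    [α = A].  Comparing the scalings, [A_jk ≠ 0] forces [(tΔ)_kk = (δ(t)Δ)_jj] for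
    all [t]; since the diagonal entries of [Δ_i] are distinct and [A] is injective
    when [φ] is, [A = P_τ diag(c)], whence [Ω δ(t) = P_τ Ω t].  Finally [β] is a
    cocycle, [β(t+s) = β(t) + e^{δ(t)Δ}β(s)], and the symmetry in [t, s] gives
    [(e^{δ(t0)Δ} - 1)β(t) = (e^{δ(t)Δ} - 1)β(t0)], i.e. [β(t) = f(δ(t)Δ) U t] with
    [f(z) = (e^z - 1)/z = Σ z^k/(k+1)!].  Conversely, when [α] and [δ] are
    invertible, [φ(x,t) = (Ax + β(t), Mt)] has an explicit continuous inverse,
    which is automatically a homomorphism. *)

Section CauchyEquation.
Variables (R : archiRealFieldType) (f : R -> R).
Hypothesis fD : {morph f : x y / x + y}.

Lemma additive0 : f 0 = 0.
Proof. by apply: (addrI (f 0)); rewrite -fD !addr0. Qed.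

Lemma additiveN x : f (- x) = - f x.
Proof. by apply/eqP; rewrite -addr_eq0 -fD addNr additive0. Qed.

Lemma additiveMn x k : f (x *+ k) = f x *+ k.
Proof. by elim: k => [|k IH]; rewrite ?additive0 // !mulrS fD IH. Qed.

Lemma additive_id : f 1 = 1 -> (forall r, 0 < r -> 0 < f r) -> forall r, f r = r.
Proof.
move=> f1 fpos.
have f_nat k : f k%:R = k%:R by rewrite additiveMn f1.
have f_le x y : x <= y -> f x <= f y.
  rewrite le_eqVlt => /predU1P[-> //|xy]; apply: ltW.
  by rewrite -subr_gt0 -additiveN -fD fpos // subr_gt0.
have f_pos r : 0 < r -> f r = r.
  move=> r_gt0.
  (* rounding [r *+ N] down to an integer shows that [f] moves it by at most 1 *)
  have dist_le1 N : `|f r - r| *+ N <= 1.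
    have /andP[kx xk] := truncn_itv (mulrn_wge0 N (ltW r_gt0)).
    move: (f_le _ _ kx) (f_le _ _ (ltW xk)); rewrite !f_nat => fk kf.
    rewrite -normrMn mulrnBl -additiveMn ler_norml; apply/andP; split; lra.
  apply/eqP; rewrite -subr_eq0 -normr_le0 leNgt; apply/negP => d_gt0.
  have := truncnS_gt `|f r - r|^-1.
  rewrite -(ltr_pM2l d_gt0) mulfV ?gt_eqF // mulr_natr => /lt_le_trans.
  by move=> /(_ _ (dist_le1 _)); rewrite ltxx.
move=> r; have [r_lt0|r_gt0|->] := ltgtP r 0; last exact: additive0.
  by rewrite -[r]opprK additiveN f_pos ?oppr_gt0.
exact: f_pos.
Qed.

End CauchyEquation.

Lemma additive_linear (R : archiRealFieldType) (f : R -> R) :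
  {morph f : x y / x + y} ->
  (forall r, 0 < r -> exists2 c, 0 < c & f r = c * f 1) ->
  forall r, f r = r * f 1.
Proof.
move=> fD fpos r; have [f1_eq0|f1_neq0] := eqVneq (f 1) 0.
  have f_pos s : 0 < s -> f s = 0 by move=> /fpos[c _ ->]; rewrite f1_eq0 mulr0.
  rewrite f1_eq0 mulr0; have [r_lt0|r_gt0|->] := ltgtP r 0; last exact: additive0 fD.
    by rewrite -[r]opprK (additiveN fD) f_pos ?oppr0 ?oppr_gt0.
  exact: f_pos.
pose h x := f x / f 1.
have hD : {morph h : x y / x + y} by move=> x y; rewrite /h fD mulrDl.
have hpos s : 0 < s -> 0 < h s by move=> /fpos[c c_gt0 fsE]; rewrite /h fsE mulfK.
by rewrite -[in RHS](additive_id hD (divff f1_neq0) hpos r) /h divfK.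
Qed.

Lemma unitmx_ker0 (F : fieldType) n (A : 'M[F]_n) :
  (forall x : 'cV_n, A *m x = 0 -> x = 0) -> A \in unitmx.
Proof.
move=> A0; rewrite -unitmx_tr -row_free_unit; apply: inj_row_free => v.
move/(congr1 trmx); rewrite trmx_mul trmxK trmx0 => /A0/(congr1 trmx).
by rewrite trmxK trmx0.
Qed.

Lemma unitmx_gram (R : realFieldType) p q (A : 'M[R]_(p, q)) :
  (forall x : 'cV_q, A *m x = 0 -> x = 0) -> A^T *m A \in unitmx.
Proof.
move=> A0; apply: unitmx_ker0 => x Gx0; apply: A0.
have : ((A *m x)^T *m (A *m x)) 0 0 = 0.
  by rewrite trmx_mul -mulmxA [A^T *m _]mulmxA Gx0 mulmx0 mxE.
move: (A *m x) => y; rewrite mxE => sum_sq0.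
have sq_ge0 k : true -> 0 <= y^T 0 k * y k 0 by rewrite mxE -expr2 sqr_ge0.
apply/matrixP => i j; rewrite ord1 [RHS]mxE; apply/eqP.
have := psumr_eq0P sq_ge0 sum_sq0 (i := i) isT.
by rewrite mxE -expr2 => /eqP; rewrite sqrf_eq0.
Qed.

Lemma gram_solve (R : realFieldType) p q (A : 'M[R]_(p, q)) (y : 'cV_q) z :
  (forall x : 'cV_q, A *m x = 0 -> x = 0) -> A *m y = z ->
  y = invmx (A^T *m A) *m A^T *m z.
Proof. by move=> A0 <-; rewrite -mulmxA (mulmxA A^T) mulKmx // unitmx_gram. Qed.

Lemma mul_diag_mxE (R : pzSemiRingType) n p (d : 'rV[R]_n) (A : 'M[R]_(n, p)) i j :
  (diag_mx d *m A) i j = d 0 i * A i j.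
Proof. by rewrite mul_diag_mx mxE. Qed.

Lemma diag_unitmx_neq0 (F : fieldType) n (D : 'M[F]_n) k :
  is_diag_mx D -> D \in unitmx -> D k k != 0.
Proof.
move=> /is_diag_mx_is_trig D_trig; rewrite unitmxE det_trig // unitfE.
by move/prodf_neq0; apply.
Qed.

Section PermutationMatrix.
Variables (R : realType) (n : nat).
Implicit Types (tau : 'S_n) (c : 'I_n -> R).

Lemma PpermE tau : Pperm R tau = perm_mx (tau^-1)%g.
Proof. by apply/matrixP => i j; rewrite !mxE. Qed.

Lemma mul_Pperm p tau (A : 'M[R]_(n, p)) j i : (Pperm R tau *m A) j i = A ((tau^-1)%g j) i.
Proof. by rewrite PpermE -row_permE mxE. Qed.

Lemma Pperm_diagE tau c j k :
  (Pperm R tau *m diag_mx (\row_k c k)) j k = ((tau^-1)%g j == k)%:R * c k.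
Proof. by rewrite mul_mx_diag !mxE. Qed.

Lemma unitmx_Pperm tau : Pperm R tau \in unitmx.
Proof. by rewrite PpermE unitmx_perm. Qed.

Lemma unitmx_Pperm_diag tau c :
  (forall k, c k != 0) -> Pperm R tau *m diag_mx (\row_k c k) \in unitmx.
Proof.
move=> c_neq0; rewrite unitmx_mul unitmx_Pperm unitmxE det_diag unitfE.
by apply/prodf_neq0 => k _; rewrite mxE.
Qed.

Lemma monomial_mx (A : 'M[R]_n) :
  (forall k, exists j, A j k != 0) ->
  (forall j k k', A j k != 0 -> A j k' != 0 -> k = k') ->
  exists c tau, (forall k, c k != 0) /\ A = Pperm R tau *m diag_mx (\row_k c k).
Proof.
move=> /fin_all_exists[sigma sigmaP] row_uniq.
have sigma_inj : injective sigma.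
  by move=> k k' eq_sigma; apply: (row_uniq (sigma k)); rewrite // eq_sigma.
pose tau := perm sigma_inj.
have A_tau k : A (tau k) k != 0 by rewrite permE.
exists (fun k => A (tau k) k), tau; split=> //; apply/matrixP => j k.
rewrite Pperm_diagE; have [<-|ne] := eqVneq ((tau^-1)%g j) k.
  by rewrite permKV mul1r.
rewrite mul0r; apply/eqP; apply: contraTT ne; rewrite negbK => Ajk.
by apply/eqP/(row_uniq j) => //; rewrite -{1}(permKV tau j).
Qed.

End PermutationMatrix.

Lemma cvg_mx_entry (R : realFieldType) p q (T : Type) (F : set_system T) {FF : Filter F}
  (f : T -> 'M[R]_(p, q)) (L : 'M[R]_(p, q)) :
  (forall i j, f x i j @[x --> F] --> L i j) -> f @ F --> L.
Proof.
move=> f_cvg; apply/cvgrPdist_le => e e_gt0.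
have near_ij (ij : 'I_p * 'I_q) : \forall x \near F, `|L ij.1 ij.2 - f x ij.1 ij.2| <= e.
  by move/cvgrPdist_le: (f_cvg ij.1 ij.2) => /(_ e e_gt0).
apply: filterS (filter_forall FF near_ij) => x near_x.
rewrite [leLHS]/Num.Def.normr /= mx_normrE (bigmax_le _ (ltW e_gt0)) //= => ij _.
by rewrite !mxE; exact: near_x.
Qed.

Lemma mulmx_continuous (R : realFieldType) p q s (M : 'M[R]_(p, q)) :
  continuous (fun x : 'M[R]_(q, s) => M *m x).
Proof.
move=> x; apply: (cvg_mx_entry (F := nbhs x)) => i j.
rewrite mxE; under eq_cvg do rewrite mxE.
apply: cvg_big => [|k _]; first exact: add_continuous.
by apply: cvgMl_tmp; exact: coord_continuous.
Qed.

Definition exprel (R : realType) (x : R) : R :=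
  if x == 0 then 1 else (expR x - 1) / x.

Lemma exprelM (R : realType) (x : R) : exprel x * x = expR x - 1.
Proof.
by rewrite /exprel; have [->|x_neq0] := eqVneq x 0; rewrite ?mulr0 ?expR0 ?subrr ?divfK.
Qed.

Lemma exprel_series_cvg (R : realType) (x : R) :
  \sum_(k < N) ((k.+1)`!%:R)^-1 * x ^+ k @[N --> \oo] --> exprel x.
Proof.
rewrite /exprel; have [->|x_neq0] := eqVneq x 0.
  rewrite -cvg_shiftS; apply: cvg_near_cst; near=> N.
  rewrite /= big_ord_recl expr0 mulr1 invr1 big1 ?addr0 // => k _.
  by rewrite expr0n mulr0.
have -> : (fun N => \sum_(k < N) ((k.+1)`!%:R)^-1 * x ^+ k) =
    (fun N => (series (exp_coeff x) N.+1 - 1) / x).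
  apply/funext => N; rewrite /series /exp_coeff /= big_nat_recl // expr0 fact0 divr1.
  rewrite addrAC subrr add0r big_mkord mulr_suml; apply: eq_bigr => k _.
  by rewrite exprSr mulrAC mulfK // mulrC.
apply: cvgMr_tmp; apply: cvgB; last exact: cvg_cst.
by rewrite (cvg_shiftS (series _)); exact: is_cvg_series_exp_coeff.
Unshelve. all: by end_near. Qed.

Lemma expr_diag_mx (R : pzRingType) n (d : 'rV[R]_n) k :
  diag_mx d ^+ k = diag_mx (\row_j d 0 j ^+ k).
Proof.
elim: k => [|k IH]; first by apply/matrixP => i j; rewrite !mxE.
by rewrite exprS IH -mulmxE mulmx_diag; congr diag_mx; apply/rowP => j; rewrite !mxE exprS.
Qed.

Lemma exprel_series_diag_cvg (R : realType) n (D : 'M[R]_n) : is_diag_mx D ->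
  \sum_(k < N) ((k.+1)`!%:R)^-1 *: D ^+ k @[N --> \oo] --> diag_mx (\row_j exprel (D j j)).
Proof.
case/diag_mxP => d ->; apply: cvg_mx_entry => i j.
have -> : (fun N => (\sum_(k < N) ((k.+1)`!%:R)^-1 *: diag_mx d ^+ k) i j) =
    (fun N => (\sum_(k < N) ((k.+1)`!%:R)^-1 * d 0 i ^+ k) *+ (i == j)).
  apply/funext => N; rewrite summxE -sumrMnl; apply: eq_bigr => k _.
  by rewrite expr_diag_mx !mxE mulrnAr.
have -> : diag_mx (\row_j exprel (diag_mx d j j)) i j = exprel (d 0 i) *+ (i == j).
  by rewrite !mxE eqxx mulr1n.
by case: (i == j); [exact: exprel_series_cvg | exact: cvg_cst].
Qed.

Section TDelta.
Variables (R : realType) (n m : nat) (Delta : 'I_m -> 'M[R]_n).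
Local Notation tD := (tDelta Delta).
Local Notation eta := (Defs.eta Delta).

Lemma tDelta_diagE t k : tD t k k = (Omega Delta *m t) k 0.
Proof. by rewrite summxE !mxE; apply: eq_bigr => i _; rewrite !mxE mulrC. Qed.

Lemma tDeltaZ a t k : tD (a *: t) k k = a * tD t k k.
Proof. by rewrite !tDelta_diagE -scalemxAr mxE. Qed.

Lemma eta0 : eta 0 = 1%:M.
Proof.
have tD0 : tD 0 = 0 by rewrite /tDelta big1 // => i _; rewrite mxE scale0r.
by apply/matrixP => i j; rewrite /Defs.eta tD0 !mxE expR0.
Qed.

Lemma eta_mulE t (x : 'cV[R]_n) k : (eta t *m x) k 0 = expR (tD t k k) * x k 0.
Proof. by rewrite mul_diag_mx !mxE. Qed.

Lemma eta_delta_mx t k :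
  eta t *m delta_mx k 0 = expR (tD t k k) *: (delta_mx k 0 : 'cV[R]_n).
Proof.
apply/matrixP => j i; rewrite ord1 eta_mulE [RHS]mxE !mxE eqxx andbT.
by have [->|_] := eqVneq j k; rewrite ?mulr1 ?mulr0.
Qed.

Hypothesis Delta_diag : forall i, is_diag_mx (Delta i).

Lemma tDelta_is_diag t : is_diag_mx (tD t).
Proof.
apply/is_diag_mxP => i j ij; rewrite summxE big1 // => k _.
by rewrite mxE (is_diag_mxP (Delta_diag k)) ?mulr0.
Qed.

Hypothesis Delta_free : forall a : 'I_m -> R, \sum_i a i *: Delta i = 0 -> forall i, a i = 0.

Lemma Omega_ker0 (t : 'cV[R]_m) : Omega Delta *m t = 0 -> t = 0.
Proof.
move=> Omt0; apply/matrixP => i j; rewrite ord1 mxE; apply: (Delta_free (a := t^~ 0)).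
apply/matrixP => k l; rewrite [RHS]mxE; have [<-|kl] := eqVneq k l.
  by rewrite -/(tD t k k) tDelta_diagE Omt0 mxE.
by rewrite (is_diag_mxP (tDelta_is_diag t)).
Qed.

End TDelta.

Lemma Delta_hyp_regular (R : realType) n m (Delta : 'I_m -> 'M[R]_n) :
  Delta_hyp Delta -> exists t0,
  (forall k, tDelta Delta t0 k k != 0) /\ injective (fun k => tDelta Delta t0 k k).
Proof.
move=> [/andP[m_gt0 _] [Delta_diag [_ Delta_unit _ Delta_inj]]].
pose i0 := Ordinal m_gt0; exists (delta_mx i0 0).
have tD_i0 k : tDelta Delta (delta_mx i0 0) k k = Delta i0 k k.
  by rewrite tDelta_diagE -colE !mxE.
split=> [k|k j]; rewrite !tD_i0; first exact: diag_unitmx_neq0.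
by apply: contra_eq => /Delta_inj.
Qed.

Section Endomorphism.
Variables (R : realType) (n m : nat) (Delta : 'I_m -> 'M[R]_n).
Variable phi : 'cV[R]_n * 'cV[R]_m -> 'cV[R]_n * 'cV[R]_m.
Hypothesis phiM : {morph phi : g h / Gmul Delta g h}.
Local Notation tD := (tDelta Delta).
Local Notation eta := (Defs.eta Delta).
Local Notation alpha x := (phi (x, 0)).1.
Local Notation gamma x := (phi (x, 0)).2.
Local Notation beta t := (phi (0, t)).1.
Local Notation delta t := (phi (0, t)).2.

Lemma phi_pair x t : phi (x, t) = Gmul Delta (phi (x, 0)) (phi (0, t)).
Proof. by rewrite -phiM /Gmul /= mulmx0 addr0 add0r. Qed.

Lemma phi_add_x x y : phi (x + y, 0) = Gmul Delta (phi (x, 0)) (phi (y, 0)).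
Proof. by rewrite -phiM /Gmul /= eta0 mul1mx addr0. Qed.

Lemma phi_add_t t s : phi (0, t + s) = Gmul Delta (phi (0, t)) (phi (0, s)).
Proof. by rewrite -phiM /Gmul /= mulmx0 addr0. Qed.

Lemma phi0 : phi (0, 0) = (0, 0).
Proof.
have := phi_add_x 0 0; rewrite addr0.
case: (phi (0, 0)) => a b; rewrite /Gmul /= => -[a_eq b_eq].
have b0 : b = 0 by apply: (addrI b); rewrite addr0 -b_eq.
move: a_eq; rewrite b0 eta0 mul1mx => a_eq.
by congr pair; apply: (addrI a); rewrite addr0 -a_eq.
Qed.

Lemma phi_conj t x :
  Gmul Delta (phi (0, t)) (phi (x, 0)) = Gmul Delta (phi (eta t *m x, 0)) (phi (0, t)).
Proof. by rewrite -!phiM /Gmul /= mulmx0 !addr0 !add0r. Qed.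

Lemma gammaD x y : gamma (x + y) = gamma x + gamma y.
Proof. by rewrite phi_add_x. Qed.

Lemma gamma_eta t x : gamma (eta t *m x) = gamma x.
Proof.
have := congr1 snd (phi_conj t x); rewrite /= => eq_conj.
by apply: (addrI (delta t)); rewrite eq_conj addrC.
Qed.

Variable t0 : 'cV[R]_m.
Hypothesis t0_neq0 : forall k, tD t0 k k != 0.

Lemma gamma_eq0 x : gamma x = 0.
Proof.
have e_neq1 k : expR (tD t0 k k) - 1 != 0.
  by rewrite subr_eq0 -expR0 (inj_eq (@expR_inj _)).
pose y := \col_k (x k 0 / (expR (tD t0 k k) - 1)).
(* [x] is a coboundary: [x = (eta t0 - 1) y], and [gamma] kills coboundaries *)
have -> : x = eta t0 *m y - y.
  apply/matrixP => k i; rewrite ord1 [in RHS]mxE eta_mulE !mxE.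
  by rewrite -[X in _ - X]mul1r -mulrBl mulrC divfK.
have gammaB a b : gamma (a - b) = gamma a - gamma b.
  by apply/eqP; rewrite eq_sym subr_eq -gammaD subrK.
by rewrite gammaB gamma_eta subrr.
Qed.

Lemma phiE x t : phi (x, t) = (alpha x + beta t, delta t).
Proof. by rewrite phi_pair /Gmul /= gamma_eq0 eta0 mul1mx add0r. Qed.

Lemma alphaD x y : alpha (x + y) = alpha x + alpha y.
Proof. by rewrite phi_add_x /= gamma_eq0 eta0 mul1mx. Qed.

Lemma alpha_eta t x : alpha (eta t *m x) = eta (delta t) *m alpha x.
Proof.
have := congr1 fst (phi_conj t x); rewrite /= gamma_eq0 eta0 mul1mx addrC.
by move/addIr.
Qed.

Lemma beta_cocycle t s : beta (t + s) = beta t + eta (delta t) *m beta s.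
Proof. by rewrite phi_add_t. Qed.

Lemma eta_scale_delta_mx k r : 0 < r ->
  exists t, eta t *m delta_mx k 0 = r *: (delta_mx k 0 : 'cV[R]_n).
Proof.
move=> r_gt0; exists ((ln r / tD t0 k k) *: t0).
by rewrite eta_delta_mx tDeltaZ divfK // lnK.
Qed.

Lemma alpha_delta_mxZ r k :
  alpha (r *: delta_mx k 0) = r *: alpha (delta_mx k 0 : 'cV[R]_n).
Proof.
apply/matrixP => j i; rewrite ord1 [RHS]mxE -[in RHS](scale1r (delta_mx k 0)).
pose f r := (alpha (r *: (delta_mx k 0 : 'cV[R]_n))) j 0.
apply: (additive_linear (f := f)) => [a b|s s_gt0]; first by rewrite /f scalerDl alphaD mxE.
have [t eta_t] := eta_scale_delta_mx k s_gt0.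
exists (expR (tD (delta t) j j)); first exact: expR_gt0.
by rewrite /f -eta_t alpha_eta eta_mulE scale1r.
Qed.

Lemma alpha_linear : exists A, forall x, alpha x = A *m x.
Proof.
exists (\matrix_(j, k) (alpha (delta_mx k 0)) j 0) => x.
have x_sum : x = \sum_k x k 0 *: delta_mx k 0.
  by rewrite {1}(matrix_sum_delta x); apply: eq_bigr => k _; rewrite big_ord1.
have alpha0 : alpha 0 = 0 by rewrite phi0.
rewrite {1}x_sum (big_morph (fun x => alpha x) alphaD alpha0).
apply/matrixP => j i; rewrite ord1 summxE !mxE; apply: eq_bigr => k _.
by rewrite alpha_delta_mxZ !mxE mulrC.
Qed.

Section AlphaMatrix.
Variable A : 'M[R]_n.
Hypothesis alphaE : forall x, alpha x = A *m x.

Lemma tDelta_delta_support t j k : A j k != 0 -> tD t k k = tD (delta t) j j.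
Proof.
move=> Ajk; have := congr1 (fun v : 'cV_n => v j 0) (alpha_eta t (delta_mx k 0)).
rewrite /= eta_delta_mx alpha_delta_mxZ eta_mulE alphaE -colE !mxE.
by move=> /(mulIf Ajk)/(@expR_inj _).
Qed.

Lemma Omega_delta c tau : (forall k, c k != 0) ->
  A = Pperm R tau *m diag_mx (\row_k c k) ->
  forall t, Omega Delta *m delta t = Pperm R tau *m Omega Delta *m t.
Proof.
move=> c_neq0 A_eq t; apply/matrixP => j i; rewrite ord1 -mulmxA mul_Pperm -!tDelta_diagE.
set k := (tau^-1)%g j; have -> : j = tau k by rewrite permKV.
by symmetry; apply: tDelta_delta_support; rewrite A_eq Pperm_diagE permK eqxx mul1r.
Qed.

Lemma alpha_ker0 psi : cancel phi psi -> forall x : 'cV[R]_n, A *m x = 0 -> x = 0.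
Proof.
move=> phiK x Ax0; have : phi (x, 0) = phi (0, 0).
  by apply: injective_projections; rewrite /= ?alphaE ?Ax0 ?mulmx0 // !gamma_eq0.
by move/(congr1 psi); rewrite !phiK => -[].
Qed.

Hypothesis t0_inj : injective (fun k => tD t0 k k).

Lemma alpha_monomial : (forall x : 'cV[R]_n, A *m x = 0 -> x = 0) ->
  exists c tau, (forall k, c k != 0) /\ A = Pperm R tau *m diag_mx (\row_k c k).
Proof.
move=> A_ker0; apply: monomial_mx => [k|j k k' Ajk Ajk'].
  apply/existsP; apply: contraT; rewrite negb_exists => /forallP Ak0.
  have /matrixP/(_ k 0)/eqP : delta_mx k 0 = 0 :> 'cV[R]_n.
    apply: A_ker0; apply/matrixP => j i; rewrite ord1 -colE !mxE.
    by move: (Ak0 j); rewrite negbK => /eqP.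
  by rewrite !mxE !eqxx oner_eq0.
by apply: t0_inj; rewrite /= (tDelta_delta_support t0 Ajk) (tDelta_delta_support t0 Ajk').
Qed.

End AlphaMatrix.

Lemma beta_exprel tau :
  (forall t, Omega Delta *m delta t = Pperm R tau *m Omega Delta *m t) ->
  exists U : 'M[R]_(n, m), forall t,
    beta t = diag_mx (\row_j exprel (tD (delta t) j j)) *m U *m t.
Proof.
move=> OmegaE.
have E_t0 j : expR (tD (delta t0) j j) - 1 != 0.
  by rewrite subr_eq0 -expR0 (inj_eq (@expR_inj _)) tDelta_diagE OmegaE -mulmxA mul_Pperm
    -tDelta_diagE.
pose v := \row_j ((beta t0) j 0 / (expR (tD (delta t0) j j) - 1)).
exists (diag_mx v *m Pperm R tau *m Omega Delta) => t; apply/matrixP => j i; rewrite ord1.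
(* the cocycle identity is symmetric in [t] and [t0] *)
have := beta_cocycle t t0; rewrite addrC beta_cocycle => /matrixP/(_ j 0) sym.
rewrite [LHS]mxE [RHS]mxE !eta_mulE in sym.
rewrite -!mulmxA (mulmxA (Pperm R tau)) -OmegaE !mul_diag_mxE -tDelta_diagE !mxE.
rewrite mulrCA exprelM.
apply: (mulIf (E_t0 j)); rewrite mulrAC divfK //.
lra.
Qed.

End Endomorphism.

Lemma G_auto_of_triangular (R : realType) n m (Delta : 'I_m -> 'M[R]_n) phi
    (A : 'M[R]_n) (M : 'M[R]_m) :
  G_endo Delta phi -> A \in unitmx -> M \in unitmx ->
  (forall x t, phi (x, t) = (A *m x + (phi (0, t)).1, M *m t)) ->
  G_auto Delta phi.
Proof.
move=> [phi_cont phiM] A_unit M_unit phiE.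
pose beta t := (phi (0, t)).1.
pose psi p := (invmx A *m (p.1 - beta (invmx M *m p.2)), invmx M *m p.2).
have phiK : cancel phi psi.
  by case=> x t; rewrite phiE /psi /= !mulKmx // addrK mulKmx.
have psiK : cancel psi phi.
  by case=> y s; rewrite /psi phiE /= !mulKVmx // subrK.
split; first by split.
exists psi; split=> //; split; last first.
  by move=> g h; rewrite -{1}(psiK g) -{1}(psiK h) -phiM phiK.
have M_cont : continuous (fun p : 'cV[R]_n * 'cV[R]_m => invmx M *m p.2).
  move=> p; apply: (continuous_comp (f := snd)); [exact: cvg_snd | exact: mulmx_continuous].
have beta_cont : continuous beta.
  move=> t; apply: (continuous_comp (f := fun s => phi (0, s))); last exact: cvg_fst.
  apply: (continuous_comp (g := phi)); last exact: phi_cont.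
  apply: (@cvg_pair _ _ _ (nbhs t) (nbhs (0 : 'cV[R]_n)) (nbhs t)).
    exact: cvg_cst.
  exact: cvg_id.
move=> p; rewrite /psi.
apply: (@cvg_pair _ _ _ (nbhs p) (nbhs (invmx A *m (p.1 - beta (invmx M *m p.2))))
  (nbhs (invmx M *m p.2))); last exact: M_cont.
apply: (@continuous_comp _ _ _ (fun q : 'cV[R]_n * 'cV[R]_m => q.1 - beta (invmx M *m q.2))
  (mulmx (invmx A))); last exact: mulmx_continuous.
apply: cvgB; first exact: cvg_fst.
exact: (continuous_comp (M_cont p) (beta_cont _)).
Qed.

Theorem mainTheorem2 (R : realType) (n m : nat) (Delta : 'I_m -> 'M[R]_n)
  (phi : 'cV[R]_n * 'cV[R]_m -> 'cV[R]_n * 'cV[R]_m) :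
  Delta_hyp Delta ->
  G_endo Delta phi ->
  let alpha := fun x : 'cV[R]_n => (phi (x, 0)).1 in
  let gamma := fun x : 'cV[R]_n => (phi (x, 0)).2 in
  let beta  := fun t : 'cV[R]_m => (phi (0, t)).1 in
  let delta := fun t : 'cV[R]_m => (phi (0, t)).2 in
  let Om := Omega Delta in
  G_auto Delta phi <->
  exists (c : 'I_n -> R) (tau : 'S_n) (U : 'M[R]_(n, m)),
    [/\ (forall k, c k != 0) /\
          (forall x, alpha x = (Pperm R tau *m diag_mx (\row_k c k)) *m x),
        (forall x, gamma x = 0),
        (forall t, delta t = (invmx (Om^T *m Om) *m Om^T *m Pperm R tau *m Om) *m t) &
        (forall t, exists S : 'M[R]_n,
           (fun N : nat => \sum_(k < N)
               ((k.+1)`!%:R)^-1 *: (tDelta Delta (delta t)) ^+ k) @ \oo --> S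
           /\ beta t = S *m U *m t)].
Proof.
move=> hD endo alpha gamma beta delta Om.
rewrite {}/alpha {}/gamma {}/beta {}/delta {}/Om; have [_ phiM] := endo.
have [_ [Delta_diag [Delta_free _ _ _]]] := hD.
have [t0 [t0_neq0 t0_inj]] := Delta_hyp_regular hD.
have Om_ker0 := Omega_ker0 Delta_diag Delta_free.
split=> [[_ [psi [_ phiK _]]] | [c [tau [U [[c_neq0 alphaE] _ deltaE _]]]]].
- have [A alphaE] := alpha_linear phiM t0_neq0.
  have A_ker0 := alpha_ker0 phiM t0_neq0 alphaE phiK.
  have [c [tau [c_neq0 A_eq]]] := alpha_monomial phiM t0_neq0 alphaE t0_inj A_ker0.
  have OmE := Omega_delta phiM t0_neq0 alphaE c_neq0 A_eq.
  have [U betaE] := beta_exprel phiM t0_neq0 OmE.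
  exists c, tau, U; split=> [|x|t|t]; first by split=> // x; rewrite alphaE A_eq.
  + exact: (gamma_eq0 phiM t0_neq0).
  + by rewrite (gram_solve Om_ker0 (OmE t)) !mulmxA.
  + by eexists; split; [exact/exprel_series_diag_cvg/tDelta_is_diag | exact: betaE].
- have OmE := Omega_delta phiM t0_neq0 alphaE c_neq0 erefl.
  apply: (G_auto_of_triangular endo (unitmx_Pperm_diag tau c_neq0)); last first.
    by move=> x t; rewrite (phiE phiM t0_neq0) alphaE deltaE.
  apply: unitmx_ker0 => t; rewrite -deltaE => delta0; apply: Om_ker0.
  rewrite -(mulKmx (unitmx_Pperm R tau) (Omega Delta *m t)).
  by rewrite [Pperm R tau *m _]mulmxA -OmE delta0 !mulmx0.
Qed.
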